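(* Let $|\psi_1\rangle,\dots,|\psi_4\rangle$ be pure qubit states with $\langle\psi_1|\psi_3\rangle=\langle\psi_2|\psi_4\rangle=0$, and consider the ensemble $\{1/4,\rho_x=|\psi_x\rangle\langle\psi_x|\}_{x=1}^4$. Then its symmetry operator is $K=I/4$ (the same for all such choices of the two orthogonal pairs), so all such sets lie in the same equivalence class, and $P_{\mathrm{guess}}=\mathrm{tr}[K]=1/2$.
   Context: For an ensemble $\{q_x,\rho_x\}$, the symmetry operator is the (unique) Hermitian $K$ for which there exist $r_x\ge0$, density operators $\sigma_x$ and a POVM $\{M_x\}$ with $K=q_x\rho_x+r_x\sigma_x$ and $r_x\mathrm{tr}[M_x\sigma_x]=0$ for all $x$; it satisfies $\mathrm{tr}[K]=P_{\mathrm{guess}}=\max_{\text{POVMs}}\sum_x q_x\mathrm{tr}[M_x\rho_x]$. Two ensembles are equivalent (same equivalence class) if their symmetry operators are unitarily equivalent. *)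

From HB Require Import structures.
From mathcomp Require Import all_boot all_order all_algebra.
Set Implicit Arguments. Unset Strict Implicit. Unset Printing Implicit Defensive.
Import Order.TTheory GRing.Theory Num.Theory.
Local Open Scope ring_scope.

Section QDefs.
Variable C : numClosedFieldType.

Definition adj m n (A : 'M[C]_(m, n)) : 'M[C]_(n, m) := (map_mx Num.conj A)^T.

Definition braket n (u v : 'cV[C]_n) : C := (adj u *m v) 0 0.

Definition hermitian_mx n (A : 'M[C]_n) : Prop := adj A = A.

Definition psd n (A : 'M[C]_n) : Prop :=
  hermitian_mx A /\ forall v : 'cV[C]_n, 0 <= (adj v *m A *m v) 0 0.

Definition density n (rho : 'M[C]_n) : Prop := psd rho /\ \tr rho = 1.

Definition unit_vec n (psi : 'cV[C]_n) : Prop := braket psi psi = 1.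
Definition proj_of n (psi : 'cV[C]_n) : 'M[C]_n := psi *m adj psi.

Definition povm n k (M : 'I_k -> 'M[C]_n) : Prop :=
  (forall x, psd (M x)) /\ \sum_(x < k) M x = 1%:M.

Definition psucc n k (q : 'I_k -> C) (rho : 'I_k -> 'M[C]_n)
  (M : 'I_k -> 'M[C]_n) : C := \sum_(x < k) q x * \tr (M x *m rho x).

Definition is_Pguess n k (q : 'I_k -> C) (rho : 'I_k -> 'M[C]_n) (p : C) : Prop :=
  (exists M, povm M /\ psucc q rho M = p) /\
  (forall M, povm M -> psucc q rho M <= p).

Definition is_symmetry_operator n k (q : 'I_k -> C) (rho : 'I_k -> 'M[C]_n)
  (K : 'M[C]_n) : Prop :=
  hermitian_mx K /\
  exists (r : 'I_k -> C) (sigma : 'I_k -> 'M[C]_n) (M : 'I_k -> 'M[C]_n),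
    povm M /\
    forall x, 0 <= r x /\ density (sigma x) /\
              K = q x *: rho x + r x *: sigma x /\
              r x * \tr (M x *m sigma x) = 0.

End QDefs.

(* The two orthogonal pairs each resolve the identity on C^2: P_0 + P_2 = P_1 + P_3 = I,
   with P_x the projector onto psi_x.  Since tr(M P_x) <= tr M, every POVM succeeds with
   probability at most (1/4) tr(sum_x M_x) = 1/2, attained by M_x = P_x / 2.  The identity
   I/4 = P_x/4 + (1/4) P_(x+2) exhibits I/4 as a symmetry operator.  Conversely, a symmetry
   operator K satisfies tr K = P_succ(M) <= 1/2 for its own POVM M, while
   <psi_x|K|psi_x> >= 1/4 for x = 0, 2; as these two values add up to tr K, both are equal
   to 1/4, so psi_0 and psi_2 are eigenvectors of K for 1/4 and K = I/4. *)
From HB Require Import structures.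
From mathcomp Require Import all_boot all_order all_algebra.
From mathcomp Require Import ring.
Import Order.TTheory GRing.Theory Num.Theory.
Local Open Scope ring_scope.
Set Implicit Arguments. Unset Strict Implicit.

Section MatrixForms.
Variable C : numClosedFieldType.

Lemma adjK m n (A : 'M[C]_(m, n)) : adj (adj A) = A.
Proof. by apply/matrixP=> i j; rewrite /adj !mxE conjCK. Qed.

Lemma adjM m n p (A : 'M[C]_(m, n)) (B : 'M[C]_(n, p)) :
  adj (A *m B) = adj B *m adj A.
Proof. by rewrite /adj map_mxM trmx_mul. Qed.

Lemma adjD m n (A B : 'M[C]_(m, n)) : adj (A + B) = adj A + adj B.
Proof. by rewrite /adj map_mxD linearD. Qed.

Lemma adjZ m n a (A : 'M[C]_(m, n)) : adj (a *: A) = a^* *: adj A.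
Proof. by rewrite /adj map_mxZ linearZ. Qed.

Lemma adj_scalar n a : adj (a%:M : 'M[C]_n) = a^*%:M.
Proof. by apply/matrixP=> i j; rewrite /adj !mxE rmorphMn eq_sym. Qed.

Lemma adj_mx11 (A : 'M[C]_1) : adj A 0 0 = (A 0 0)^*.
Proof. by rewrite /adj !mxE. Qed.

Lemma mulmx11E (A B : 'M[C]_1) : (A *m B) 0 0 = A 0 0 * B 0 0.
Proof. by rewrite !mxE big_ord1. Qed.

Lemma braketC n (u v : 'cV[C]_n) : braket u v = (braket v u)^*.
Proof. by rewrite /braket -adj_mx11 adjM adjK. Qed.

Definition mxform n (u : 'cV[C]_n) (A : 'M[C]_n) (v : 'cV[C]_n) : C :=
  (adj u *m A *m v) 0 0.

Lemma mxformDl n (u v w : 'cV[C]_n) a A :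
  mxform (a *: u + v) A w = a^* * mxform u A w + mxform v A w.
Proof. by rewrite /mxform adjD adjZ !mulmxDl -!scalemxAl !mxE. Qed.

Lemma mxformDr n (u v w : 'cV[C]_n) a A :
  mxform u A (a *: v + w) = a * mxform u A v + mxform u A w.
Proof. by rewrite /mxform !mulmxDr -!scalemxAr !mxE. Qed.

Lemma mxformZ n (u v : 'cV[C]_n) a A : mxform u (a *: A) v = a * mxform u A v.
Proof. by rewrite /mxform -scalemxAr -scalemxAl mxE. Qed.

Lemma mxformD n (u v : 'cV[C]_n) A B :
  mxform u (A + B) v = mxform u A v + mxform u B v.
Proof. by rewrite /mxform mulmxDr mulmxDl mxE. Qed.

Lemma mxform_herm n (u v : 'cV[C]_n) A :
  hermitian_mx A -> mxform u A v = (mxform v A u)^*.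
Proof. by move=> hA; rewrite /mxform -adj_mx11 !adjM adjK hA mulmxA. Qed.

Lemma mxform_delta n (i : 'I_n) A (v : 'cV[C]_n) :
  mxform (delta_mx i 0) A v = (A *m v) i 0.
Proof.
rewrite /mxform; have -> : adj (delta_mx i 0 : 'cV[C]_n) = delta_mx 0 i.
  by apply/matrixP=> a b; rewrite /adj !mxE conjC_nat andbC.
by rewrite -mulmxA -rowE mxE.
Qed.

Lemma mxform_proj n (u e v : 'cV[C]_n) :
  mxform u (proj_of e) v = braket u e * braket e v.
Proof. by rewrite /mxform /proj_of !mulmxA -mulmxA mulmx11E. Qed.

Lemma mxform_proj_unit n (e : 'cV[C]_n) : unit_vec e -> mxform e (proj_of e) e = 1.
Proof. by move=> He; rewrite mxform_proj He mulr1. Qed.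

Lemma mxtrace_mul_proj n (A : 'M[C]_n) e : \tr (A *m proj_of e) = mxform e A e.
Proof. by rewrite /proj_of mulmxA mxtrace_mulC trace_mx11 /mxform mulmxA. Qed.

Lemma mxtrace_proj n (e : 'cV[C]_n) : unit_vec e -> \tr (proj_of e) = 1.
Proof. by move=> He; rewrite /proj_of mxtrace_mulC trace_mx11. Qed.

Lemma proj_mul_unit n (e : 'cV[C]_n) : unit_vec e -> proj_of e *m e = e.
Proof.
move=> He; rewrite /proj_of -mulmxA (mx11_scalar (adj e *m e)).
by rewrite -[(adj e *m e) 0 0]/(braket e e) He mulmx1.
Qed.

Lemma psd_mxform_ge0 n (A : 'M[C]_n) v : psd A -> 0 <= mxform v A v.
Proof. by case=> _; apply. Qed.

Lemma psd_proj n (e : 'cV[C]_n) : psd (proj_of e).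
Proof.
split; first by rewrite /hermitian_mx /proj_of adjM adjK.
move=> v; rewrite -/(mxform v _ v) mxform_proj [braket v e]braketC mulrC.
exact: mul_conjC_ge0.
Qed.

Lemma psdZ n a (A : 'M[C]_n) : 0 <= a -> psd A -> psd (a *: A).
Proof.
move=> a0 [hA pA]; split; first by rewrite /hermitian_mx adjZ hA (geC0_conj a0).
by move=> v; rewrite -/(mxform v _ v) mxformZ; apply: mulr_ge0 => //; apply: pA.
Qed.

(* Expand the form at [l v + e_i] with [l <w|A|v>] real and negative enough to go below 0. *)
Lemma psd_mxform_eq0 n (A : 'M[C]_n) v : psd A -> mxform v A v = 0 -> A *m v = 0.
Proof.
move=> [hA pA] Av0; apply/matrixP=> i j; rewrite (ord1 j) [RHS]mxE -mxform_delta.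
set w := delta_mx i 0; set c := mxform w A v; set d := mxform w A w.
apply/eqP/negPn/negP => c_neq0.
have d_ge0 : 0 <= d by apply: pA.
pose l := - (d + 1) / (2 * c).
have lc : l * c = - (d + 1) / 2 by rewrite /l invfM mulrA mulfVK.
have lc_real : l^* * c^* = l * c.
  have lc_le0 : l * c <= 0.
    by rewrite lc mulr_le0_ge0 ?invr_ge0 ?ler0n // oppr_le0 addr_ge0.
  by rewrite -[RHS](conj_Creal (ler0_real lc_le0)) [RHS]rmorphM.
have := pA (l *: v + w).
rewrite -/(mxform _ _ _) mxformDl !mxformDr Av0 mulr0 add0r.
rewrite (mxform_herm v w hA) -/c -/d lc_real lc.
have -> : - (d + 1) / 2 + (- (d + 1) / 2 + d) = -1 by field.
by rewrite oppr_ge0 ler10.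
Qed.

Lemma mx_eigen_of_mxform n (e : 'cV[C]_n) (K P : 'M[C]_n) a :
  unit_vec e -> psd P -> K = a *: proj_of e + P ->
  mxform e K e = a -> K *m e = a *: e.
Proof.
move=> He pP -> /eqP; rewrite mxformD mxformZ mxform_proj_unit // mulr1.
rewrite -subr_eq0 addrC addKr => /eqP /(psd_mxform_eq0 pP) Pe0.
by rewrite mulmxDl Pe0 addr0 -scalemxAl proj_mul_unit.
Qed.

Lemma proj_add_orthonormal (e f : 'cV[C]_2) :
  unit_vec e -> unit_vec f -> braket e f = 0 -> proj_of e + proj_of f = 1%:M.
Proof.
move=> He Hf Hef.
have Hfe : braket f e = 0 by rewrite braketC Hef conjC0.
pose U : 'M[C]_(2, 1 + 1) := row_mx e f.
have adjU : adj U = col_mx (adj e) (adj f) by rewrite /U /adj map_row_mx tr_row_mx.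
have unitaryU : adj U *m U = 1%:M.
  rewrite adjU mul_col_row (mx11_scalar (adj e *m e)) (mx11_scalar (adj e *m f)).
  rewrite (mx11_scalar (adj f *m e)) (mx11_scalar (adj f *m f)).
  rewrite -[(adj e *m e) 0 0]/(braket e e) -[(adj e *m f) 0 0]/(braket e f).
  rewrite -[(adj f *m e) 0 0]/(braket f e) -[(adj f *m f) 0 0]/(braket f f).
  by rewrite He Hf Hef Hfe !raddf0 -scalar_mx_block.
by rewrite -(mulmx1C unitaryU) adjU mul_row_col.
Qed.

Lemma mxform_ge_of_decomposition n (e : 'cV[C]_n) (K P : 'M[C]_n) a :
  unit_vec e -> psd P -> K = a *: proj_of e + P -> a <= mxform e K e.
Proof.
move=> He pP ->; rewrite mxformD mxformZ mxform_proj_unit // mulr1 lerDl.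
exact: psd_mxform_ge0.
Qed.

Section ResolutionOfIdentity.
Variables (n : nat) (e f : 'cV[C]_n).
Hypothesis ef1 : proj_of e + proj_of f = 1%:M.

Lemma mxtrace_mxform_pair (A : 'M[C]_n) : \tr A = mxform e A e + mxform f A f.
Proof. by rewrite -{1}[A]mulmx1 -ef1 mulmxDr mxtraceD !mxtrace_mul_proj. Qed.

Lemma mxtrace_mul_proj_le (A : 'M[C]_n) : psd A -> \tr (A *m proj_of e) <= \tr A.
Proof.
move=> pA; rewrite [X in _ <= X]mxtrace_mxform_pair mxtrace_mul_proj lerDl.
exact: psd_mxform_ge0.
Qed.

Lemma scalar_mx_of_eigen_pair (K : 'M[C]_n) a :
  K *m e = a *: e -> K *m f = a *: f -> K = a%:M.
Proof.
move=> Ke Kf; rewrite -[K]mulmx1 -ef1 mulmxDr /proj_of !mulmxA Ke Kf.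
by rewrite -!scalemxAl -scalerDr ef1 scalemx1.
Qed.

End ResolutionOfIdentity.

Lemma mxtrace_symmetry_operator n k (q : 'I_k -> C) (rho : 'I_k -> 'M[C]_n) K :
  is_symmetry_operator q rho K -> exists M, povm M /\ \tr K = psucc q rho M.
Proof.
move=> [_ [r [sigma [M [[pM sumM] HK]]]]]; exists M; split=> //.
rewrite -[K]mul1mx -sumM mulmx_suml raddf_sum; apply: eq_bigr => x _.
have [_ [_ [-> Msigma0]]] := HK x.
by rewrite /= mulmxDr -!scalemxAr mxtraceD !mxtraceZ Msigma0 addr0.
Qed.

End MatrixForms.

Lemma eq_of_ge_sum_le (R : numDomainType) (a u w : R) :
  a <= u -> a <= w -> u + w <= a + a -> u = a /\ w = a.
Proof.
move=> au aw uwa; split; apply/le_anti; rewrite ?au ?aw andbT.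
- by rewrite -(lerD2r w); apply: le_trans uwa _; rewrite lerD2l.
- by rewrite -(lerD2l u); apply: le_trans uwa _; rewrite lerD2r.
Qed.

Lemma ord4_cases (x : 'I_4) : [\/ x = 0, x = 1, x = 2 | x = 3].
Proof.
by case: x => -[|[|[|[|//]]]] lt;
  [constructor 1 | constructor 2 | constructor 3 | constructor 4]; apply/val_inj.
Qed.

Section FourStates.
Variables (C : numClosedFieldType) (psi : 'I_4 -> 'cV[C]_2).
Hypothesis psi_unit : forall x, unit_vec (psi x).
Hypothesis psi02 : braket (psi 0) (psi 2) = 0.
Hypothesis psi13 : braket (psi 1) (psi 3) = 0.

Local Notation q := (fun _ : 'I_4 => 4^-1 : C).
Local Notation rho := (fun x : 'I_4 => proj_of (psi x)).

(* The partner of [psi x] is [psi (x + 2)], with [+] taken modulo 4. *)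
Lemma braket_partner x : braket (psi x) (psi (x + 2)) = 0.
Proof.
have [-> | -> | -> | ->] := ord4_cases x.
- by rewrite add0r.
- by have -> : (1 + 2 : 'I_4) = 3 by apply/val_inj.
- have -> : (2 + 2 : 'I_4) = 0 by apply/val_inj.
  by rewrite braketC psi02 conjC0.
- have -> : (3 + 2 : 'I_4) = 1 by apply/val_inj.
  by rewrite braketC psi13 conjC0.
Qed.

Lemma proj_add_partner x : proj_of (psi x) + proj_of (psi (x + 2)) = 1%:M.
Proof. exact: proj_add_orthonormal (braket_partner x). Qed.

Lemma sum_proj : \sum_x proj_of (psi x) = 2%:M.
Proof.
set S := \sum_x _.
have SS : S + S = 4%:M.
  rewrite {2}/S (reindex_inj (addIr 2)) -big_split /=.
  by rewrite (eq_bigr _ (fun x _ => proj_add_partner x)) sumr_const card_ord -raddfMn.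
have -> : S = 2^-1 *: (S + S).
  by rewrite -mulr2n -scaler_nat scalerA mulVf ?pnatr_eq0 ?scale1r.
by rewrite SS scale_scalar_mx -[4 : C]/((2 * 2)%:R) natrM mulKf ?pnatr_eq0.
Qed.

Lemma psucc_le_half M : povm M -> psucc q rho M <= 2^-1.
Proof.
move=> [pM sumM].
have -> : (2^-1 : C) = \sum_x 4^-1 * \tr (M x).
  by rewrite -mulr_sumr -[X in _ * X]raddf_sum /= sumM mxtrace1; field.
apply: ler_sum => x _; rewrite ler_wpM2l ?invr_ge0 ?ler0n //=.
exact (mxtrace_mul_proj_le (proj_add_partner x) (pM x)).
Qed.

Lemma povm_half_proj : povm (fun x => 2^-1 *: rho x).
Proof.
split; first by move=> x; apply: psdZ (psd_proj _); rewrite invr_ge0 ler0n.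
by rewrite -scaler_sumr sum_proj scale_scalar_mx mulVf ?pnatr_eq0.
Qed.

Lemma psucc_half_proj : psucc q rho (fun x => 2^-1 *: rho x) = 2^-1.
Proof.
rewrite /psucc (eq_bigr (fun _ => 4^-1 * 2^-1)) => [|x _]; last first.
  by rewrite -scalemxAl mxtraceZ mxtrace_mul_proj mxform_proj_unit ?mulr1.
by rewrite sumr_const card_ord -mulr_natr; field.
Qed.

Lemma is_Pguess_half : is_Pguess q rho 2^-1.
Proof.
split; last exact: psucc_le_half.
by exists (fun x => 2^-1 *: rho x); split; [apply: povm_half_proj | apply: psucc_half_proj].
Qed.

Lemma symmetry_operator_quarter : is_symmetry_operator q rho (4^-1%:M).
Proof.
have quarter_ge0 : (0 : C) <= 4^-1 by rewrite invr_ge0 ler0n.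
split; first by rewrite /hermitian_mx adj_scalar geC0_conj.
exists (fun _ => 4^-1), (fun x => proj_of (psi (x + 2))), (fun x => 2^-1 *: rho x).
split=> [|x]; first exact: povm_half_proj.
split=> //; split; first by split; [apply: psd_proj | apply: mxtrace_proj].
split; first by rewrite -scalerDr proj_add_partner scalemx1.
by rewrite -scalemxAl mxtraceZ mxtrace_mul_proj mxform_proj braket_partner !mulr0.
Qed.

Lemma symmetry_operator_eq_quarter K : is_symmetry_operator q rho K -> K = 4^-1%:M.
Proof.
move=> symK; have [M [pM trK]] := mxtrace_symmetry_operator symK.
have [_ [r [sigma [? [_ HK]]]]] := symK.
have decK x : K = 4^-1 *: proj_of (psi x) + r x *: sigma x /\ psd (r x *: sigma x).
  by have [r_ge0 [[psd_sigma _] [-> _]]] := HK x; split; last exact: psdZ.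
have [K0 psd0] := decK 0; have [K2 psd2] := decK (0 + 2).
have [form0 form2] : mxform (psi 0) K (psi 0) = 4^-1
                     /\ mxform (psi (0 + 2)) K (psi (0 + 2)) = 4^-1.
  apply: eq_of_ge_sum_le; [exact: mxform_ge_of_decomposition K0 |
                           exact: mxform_ge_of_decomposition K2 |].
  rewrite -(mxtrace_mxform_pair (proj_add_partner 0)) trK.
  have -> : (4^-1 + 4^-1 : C) = 2^-1 by field.
  exact: psucc_le_half.
apply: (scalar_mx_of_eigen_pair (proj_add_partner 0)).
- exact: mx_eigen_of_mxform psd0 K0 form0.
- exact: mx_eigen_of_mxform psd2 K2 form2.
Qed.

End FourStates.

Theorem mainTheorem7 (C : numClosedFieldType) (psi : 'I_4 -> 'cV[C]_2) :
  (forall x, unit_vec (psi x)) ->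
  braket (psi 0) (psi 2) = 0 ->
  braket (psi 1) (psi 3) = 0 ->
  let q : 'I_4 -> C := fun _ => 4^-1 in
  let rho : 'I_4 -> 'M[C]_2 := fun x => proj_of (psi x) in
  (forall K : 'M[C]_2, is_symmetry_operator q rho K <-> K = 4^-1%:M) /\
  is_Pguess q rho (2^-1) /\ \tr (4^-1%:M : 'M[C]_2) = 2^-1.
Proof.
move=> psi_unit psi02 psi13 q rho.
split; [move=> K; split | split].
- exact: symmetry_operator_eq_quarter.
- by move=> ->; apply: symmetry_operator_quarter.
- exact: is_Pguess_half.
- by rewrite mxtrace_scalar -mulr_natr; field.
Qed.
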